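(* Let $\mathbb K$ be algebraically closed of characteristic $0$, $f(y)=\prod_{i=1}^{\gamma}(y-\alpha_i)^{\beta_i}$ with pairwise distinct $\alpha_i\in\mathbb K^*$ and $\beta_i\ge1$, and $U_f=\operatorname{Spec}\mathbb K[x_1,x_2,y^{\pm1}]/(x_1x_2-f(y))$. Then the closed irreducible curves in $U_f$ isomorphic to $\mathbb A^1$ are exactly the $2\gamma$ curves $\{x_2=0,\ y=\alpha_i\}$ and $\{x_1=0,\ y=\alpha_i\}$, $i=1,\dots,\gamma$. *)

From HB Require Import structures.
From mathcomp Require Import all_boot all_order all_algebra.
Set Implicit Arguments. Unset Strict Implicit. Unset Printing Implicit Defensive.
Import GRing.Theory.
Local Open Scope ring_scope.

Inductive in_subalg (K : fieldType) (gens : seq {poly K}) : {poly K} -> Prop :=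
  | sa_const (c : K) : in_subalg gens c%:P
  | sa_gen (p : {poly K}) : p \in gens -> in_subalg gens p
  | sa_add (p q : {poly K}) : in_subalg gens p -> in_subalg gens q -> in_subalg gens (p + q)
  | sa_mul (p q : {poly K}) : in_subalg gens p -> in_subalg gens q -> in_subalg gens (p * q).

(* U_f = Spec K[x1,x2,y,y^-1]/(x1 x2 - f(y)); its coordinate ring is
   K[x1,x2,y,z]/(x1 x2 - f(y), y z - 1).  A morphism A^1 -> U_f is given by
   (p1,p2,q,r) in K[t]^4 with p1 p2 = f(q), q r = 1, i.e. the K-algebra map
   x1 |-> p1, x2 |-> p2, y |-> q, y^-1 |-> r.  It is a closed embedding iff
   this map of coordinate rings is surjective, i.e. t lies in K[p1,p2,q,r]. *)
Definition closed_embedding_A1 (K : fieldType) (f : {poly K})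
    (p1 p2 q r : {poly K}) : Prop :=
  [/\ q * r = 1, p1 * p2 = f \Po q & in_subalg [:: p1; p2; q; r] 'X].

Definition image_curve (K : fieldType) (p1 p2 q : {poly K}) (pt : K * K * K) : Prop :=
  exists t : K, pt = (p1.[t], p2.[t], q.[t]).

Definition curve_x2_zero (K : fieldType) (a : K) (pt : K * K * K) : Prop :=
  pt.1.2 = 0 /\ pt.2 = a.
Definition curve_x1_zero (K : fieldType) (a : K) (pt : K * K * K) : Prop :=
  pt.1.1 = 0 /\ pt.2 = a.

Definition same_set (T : Type) (A B : T -> Prop) : Prop := forall x, A x <-> B x.

From HB Require Import structures.
From mathcomp Require Import all_boot all_order all_algebra.
Import GRing.Theory.
Local Open Scope ring_scope.

(* The units of K[t] are the nonzero constants, so y is constant on a curve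
   A^1 -> U_f, say y = c, and then x1 x2 = f(c) is constant too.  If f(c) were
   nonzero, x1 and x2 would also be constants and could not generate t; hence
   c is a root alpha_i of f and one of x1, x2 vanishes.  The other one
   generates t only if it is nonconstant, and then it takes every value of the
   algebraically closed field K, so the image is a whole line.  Neither the
   characteristic nor the distinctness of the alpha_i plays a role. *)

Section Subalgebra.

Context {K : fieldType}.

Lemma in_subalg_size_le1 {gens : seq {poly K}} {p : {poly K}} :
  all (fun g : {poly K} => (size g <= 1)%N) gens -> in_subalg gens p ->
  (size p <= 1)%N.
Proof.
move=> gens_const; elim=> {p} [c | p p_gen | p q _ sp _ sq | p q _ sp _ sq].
- by rewrite size_polyC leq_b1.
- exact: (allP gens_const).
- by apply: leq_trans (size_polyD p q) _; rewrite geq_max sp sq.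
- by rewrite (size1_polyC sp) (size1_polyC sq) -polyCM size_polyC leq_b1.
Qed.

Lemma X_notin_subalg_const {gens : seq {poly K}} :
  all (fun g : {poly K} => (size g <= 1)%N) gens -> ~ in_subalg gens 'X.
Proof. by move=> gens_const /(in_subalg_size_le1 gens_const); rewrite size_polyX. Qed.

End Subalgebra.

Lemma size_poly_unit {R : idomainType} {p : {poly R}} :
  p \is a GRing.unit -> size p = 1%N.
Proof. by rewrite poly_unitE => /andP[/eqP]. Qed.

Lemma horner_surj {K : closedFieldType} {p : {poly K}} (x : K) :
  (1 < size p)%N -> exists t, p.[t] = x.
Proof.
move=> p_nonconst.
have : size (p - x%:P) != 1%N.
  by rewrite size_polyDl ?size_polyN ?size_polyC ?neq_ltn ?p_nonconst ?orbT //;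
     apply: leq_ltn_trans p_nonconst; rewrite leq_b1.
case/closed_rootP=> t /rootP/eqP; rewrite !hornerE subr_eq0 => /eqP pt.
by exists t.
Qed.

Lemma root_prod_XsubC_exp {R : idomainType} {n : nat} (a : 'I_n -> R)
    (m : 'I_n -> nat) (c : R) :
  (forall i, 0 < m i)%N ->
  root (\prod_(i < n) ('X - (a i)%:P) ^+ m i) c <-> exists i, c = a i.
Proof.
move=> m_gt0; rewrite /root horner_prod; split.
- move/prodf_eq0=> [i _]; rewrite horner_exp hornerXsubC expf_eq0 subr_eq0.
  by case/andP=> _ /eqP ->; exists i.
- move=> [i ->]; apply/prodf_eq0; exists i => //.
  by rewrite horner_exp hornerXsubC subrr expf_eq0 m_gt0 eqxx.
Qed.

Section ClosedEmbedding.

Context {K : fieldType} {f p1 p2 q r : {poly K}}.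
Hypothesis emb : closed_embedding_A1 f p1 p2 q r.

Lemma closed_embedding_size_y : size q = 1%N.
Proof. by have [qr _ _] := emb; apply: size_poly_unit; apply/unitrPr; exists r. Qed.

Lemma closed_embedding_size_yinv : size r = 1%N.
Proof.
have [qr _ _] := emb.
by apply: size_poly_unit; apply/unitrPr; exists q; rewrite mulrC.
Qed.

Lemma closed_embedding_y_const : q = (q`_0)%:P.
Proof. by apply: size1_polyC; rewrite closed_embedding_size_y. Qed.

Lemma closed_embedding_y_root : root f q`_0.
Proof.
have [_ p12 gen_X] := emb.
apply: contraT => f_nz; exfalso; apply: (X_notin_subalg_const _ gen_X).
have : p1 * p2 \is a GRing.unit.
  rewrite p12 closed_embedding_y_const comp_polyCr poly_unitE size_polyC coefC.
  by rewrite f_nz unitfE.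
rewrite unitrM => /andP[p1_unit p2_unit].
rewrite /= (size_poly_unit p1_unit) (size_poly_unit p2_unit).
by rewrite closed_embedding_size_y closed_embedding_size_yinv.
Qed.

Lemma closed_embedding_x_axis :
  (p1 = 0 /\ (1 < size p2)%N) \/ (p2 = 0 /\ (1 < size p1)%N).
Proof.
have [_ p12 gen_X] := emb.
have : p1 * p2 = 0.
  by rewrite p12 closed_embedding_y_const comp_polyCr (rootP closed_embedding_y_root).
move/eqP; rewrite mulf_eq0 => /orP[/eqP p1_0 | /eqP p2_0]; [left | right];
  split=> //; rewrite ltnNge; apply/negP => p_const;
  apply: (X_notin_subalg_const _ gen_X).
- by rewrite /= p1_0 size_poly0 p_const
    closed_embedding_size_y closed_embedding_size_yinv.
- by rewrite /= p2_0 size_poly0 p_const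
    closed_embedding_size_y closed_embedding_size_yinv.
Qed.

End ClosedEmbedding.

Section Lines.

Context {K : fieldType} {f : {poly K}} {a : K}.
Hypotheses (f_a : root f a) (a_nz : a != 0).

Lemma closed_embedding_x2_zero : closed_embedding_A1 f 'X 0 a%:P a^-1%:P.
Proof.
split; first by rewrite -polyCM mulfV.
- by rewrite mulr0 comp_polyCr (rootP f_a).
- by apply: sa_gen; rewrite inE eqxx.
Qed.

Lemma closed_embedding_x1_zero : closed_embedding_A1 f 0 'X a%:P a^-1%:P.
Proof.
split; first by rewrite -polyCM mulfV.
- by rewrite mul0r comp_polyCr (rootP f_a).
- by apply: sa_gen; rewrite !inE eqxx orbT.
Qed.

End Lines.

Section Images.

Context {K : closedFieldType} {p : {poly K}} {c : K}.
Hypothesis p_nonconst : (1 < size p)%N.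

Lemma image_curve_x2_zero : same_set (image_curve p 0 c%:P) (curve_x2_zero c).
Proof.
move=> [[x1 x2] y]; rewrite /curve_x2_zero /=; split.
- by case=> t [_ -> ->]; rewrite horner0 hornerC.
- case=> -> ->; have [t pt] := horner_surj x1 p_nonconst.
  by exists t; rewrite pt horner0 hornerC.
Qed.

Lemma image_curve_x1_zero : same_set (image_curve 0 p c%:P) (curve_x1_zero c).
Proof.
move=> [[x1 x2] y]; rewrite /curve_x1_zero /=; split.
- by case=> t [-> _ ->]; rewrite horner0 hornerC.
- case=> -> ->; have [t pt] := horner_surj x2 p_nonconst.
  by exists t; rewrite pt horner0 hornerC.
Qed.

End Images.

Theorem lemma5p4 (K : closedFieldType) (hchar : [pchar K] =i pred0)
  (gamma : nat) (alpha : 'I_gamma -> K) (beta : 'I_gamma -> nat)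
  (halpha_inj : injective alpha) (halpha_nz : forall i, alpha i != 0)
  (hbeta : forall i, (0 < beta i)%N) :
  let f := \prod_(i < gamma) ('X - (alpha i)%:P) ^+ (beta i) in
  (forall p1 p2 q r : {poly K}, closed_embedding_A1 f p1 p2 q r ->
     exists i : 'I_gamma,
       same_set (image_curve p1 p2 q) (curve_x2_zero (alpha i)) \/
       same_set (image_curve p1 p2 q) (curve_x1_zero (alpha i)))
  /\
  (forall i : 'I_gamma,
     (exists p1 p2 q r : {poly K}, closed_embedding_A1 f p1 p2 q r /\
        same_set (image_curve p1 p2 q) (curve_x2_zero (alpha i))) /\
     (exists p1 p2 q r : {poly K}, closed_embedding_A1 f p1 p2 q r /\
        same_set (image_curve p1 p2 q) (curve_x1_zero (alpha i)))).
Proof.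
move=> f; have root_f c := root_prod_XsubC_exp alpha beta c hbeta.
split=> [p1 p2 q r emb | i].
- have [i q0] := (root_f _).1 (closed_embedding_y_root emb).
  exists i; rewrite (closed_embedding_y_const emb) q0.
  case: (closed_embedding_x_axis emb) => -[-> nonconst].
  + by right; apply: image_curve_x1_zero nonconst.
  + by left; apply: image_curve_x2_zero nonconst.
- have f_alpha : root f (alpha i) by apply/root_f; exists i.
  have X_nonconst : (1 < size ('X : {poly K}))%N by rewrite size_polyX.
  split; do 4 eexists.
  + split; first exact: closed_embedding_x2_zero f_alpha (halpha_nz i).
    exact: image_curve_x2_zero X_nonconst.
  + split; first exact: closed_embedding_x1_zero f_alpha (halpha_nz i).
    exact: image_curve_x1_zero X_nonconst.
Qed.
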